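(* Let $(\Sigma,\mathscr{P})$ be a Kelvin-Planck theory with set $\mathscr{T}_{CD}$ of Clausius-Duhem temperature scales, let $\Sigma^0\subset\Sigma$, and let $\mathscr{T}^0_{CD}$ be the set of restrictions of members of $\mathscr{T}_{CD}$ to $\Sigma^0$. The following are equivalent: (i) all members of $\mathscr{T}^0_{CD}$ are positive multiples of some fixed one; (ii) for each pair of distinct states in $\Sigma^0$ there is a Carnot element operating between them.
   Context: $\Sigma$ is a compact Hausdorff space. $\mathscr{M}(\Sigma)$ is the vector space of regular signed Borel measures on $\Sigma$ with its weak-star topology; $\mathscr{M}_+(\Sigma)$ the nonnegative members; $\mathscr{M}^\circ(\Sigma)=\{\mu:\mu(\Sigma)=0\}$; $\mathscr{V}(\Sigma)=\mathscr{M}^\circ(\Sigma)\oplus\mathscr{M}(\Sigma)$ with the product topology. For $\mathscr{P}\subset\mathscr{V}(\Sigma)$, $\hat{\mathscr{P}}$ is the closure of the set of nonnegative multiples of members of $\mathscr{P}$. A thermodynamical theory is $(\Sigma,\mathscr{P})$ with $\hat{\mathscr{P}}$ convex; it is Kelvin-Planck if $\hat{\mathscr{P}}\cap\{(0,\nu):\nu\in\mathscr{M}_+(\Sigma)\}=\{(0,0)\}$. A Clausius-Duhem pair is $(\eta,T)$, $\eta\in C(\Sigma,\mathbb{R})$, $T\in C(\Sigma,(0,\infty))$, with $\int_\Sigma\eta\,d(\Delta\mathscr{m})\ge\int_\Sigma\frac{d\mathscr{q}}{T}$ for all $(\Delta\mathscr{m},\mathscr{q})\in\mathscr{P}$; $T$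 is then a Clausius-Duhem temperature scale. A reversible element is a member of $\hat{\mathscr{P}}$ whose negative also lies in $\hat{\mathscr{P}}$. A Carnot element operating between states $\sigma'$ and $\sigma$ is a reversible element of the form $(0,c'\delta_{\sigma'}-c\,\delta_\sigma)$ with $c',c>0$ constants. *)

From mathcomp Require Import all_boot all_order all_algebra.
From mathcomp Require Import all_classical all_reals all_analysis.
Import numFieldNormedType.Exports.
Import Order.TTheory GRing.Theory Num.Theory.
Local Open Scope ring_scope.
Local Open Scope classical_set_scope.

(* Regular signed Borel measures on a compact Hausdorff space Sigma are
   represented, via the Riesz-Markov theorem, as bounded linear functionals
   on C(Sigma,R).  A "functional" is only meaningful through its values on
   continuous functions; every notion below depends only on those values. *)

Section Thermo.
Context {R : realType} {T : topologicalType}.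

Definition functional := (T -> R) -> R.

Definition one : T -> R := fun _ => 1.
Definition zerof : functional := fun _ => 0.

Definition is_measure (mu : functional) : Prop :=
  [/\ (forall f g : T -> R, continuous f -> continuous g ->
         mu (fun x => f x + g x) = mu f + mu g),
      (forall (a : R) (f : T -> R), continuous f -> mu (fun x => a * f x) = a * mu f) &
      (exists M : R, forall (f : T -> R) (c : R), continuous f ->
         (forall x, `|f x| <= c) -> `|mu f| <= M * c)].

Definition meq (mu nu : functional) : Prop :=
  forall f : T -> R, continuous f -> mu f = nu f.

Definition is_pos_measure (mu : functional) : Prop :=
  is_measure mu /\
  forall f : T -> R, continuous f -> (forall x, 0 <= f x) -> 0 <= mu f.

Definition dirac (s : T) : functional := fun f => f s.

(* members of V(Sigma) = M^o(Sigma) (+) M(Sigma) *)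
Definition in_V (p : functional * functional) : Prop :=
  [/\ is_measure p.1, is_measure p.2 & p.1 one = 0].

(* \hat P : closure in V(Sigma) (weak-star product topology) of the set of
   nonnegative multiples of members of P.  The basic weak-star neighbourhoods
   of p are given by finitely many continuous test functions and an eps > 0. *)
Definition hat (P : set (functional * functional)) : set (functional * functional) :=
  [set p | in_V p /\
    forall (n : nat) (fs : 'I_n -> T -> R) (eps : R),
      (forall i, continuous (fs i)) -> 0 < eps ->
      exists (lam : R) (q : functional * functional),
        [/\ P q, 0 <= lam &
          forall i, `|p.1 (fs i) - lam * q.1 (fs i)| < eps /\
                    `|p.2 (fs i) - lam * q.2 (fs i)| < eps]].

Definition convex_set (S : set (functional * functional)) : Prop :=
  forall p q (t : R), S p -> S q -> 0 <= t -> t <= 1 ->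
    S (fun f => t * p.1 f + (1 - t) * q.1 f,
       fun f => t * p.2 f + (1 - t) * q.2 f).

Definition thermo_theory (P : set (functional * functional)) : Prop :=
  (forall p, P p -> in_V p) /\ convex_set (hat P).

Definition Kelvin_Planck (P : set (functional * functional)) : Prop :=
  [/\ thermo_theory P,
      hat P (zerof, zerof) &
      forall p, hat P p -> meq p.1 zerof -> is_pos_measure p.2 ->
        meq p.2 zerof].

Definition CD_pair (P : set (functional * functional)) (eta Temp : T -> R) : Prop :=
  [/\ continuous eta, continuous Temp, (forall x, 0 < Temp x) &
      forall p, P p -> p.2 (fun x => (Temp x)^-1) <= p.1 eta].

Definition CD_scale (P : set (functional * functional)) (Temp : T -> R) : Prop :=
  exists eta, CD_pair P eta Temp.

Definition reversible (P : set (functional * functional))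
  (p : functional * functional) : Prop :=
  hat P p /\ hat P (fun f => - p.1 f, fun f => - p.2 f).

Definition has_Carnot (P : set (functional * functional)) (s' s : T) : Prop :=
  exists c' c : R, [/\ 0 < c', 0 < c &
    reversible P (zerof, fun f => c' * dirac s' f - c * dirac s f)].

End Thermo.

From Pilot Require Import Defs.
From mathcomp Require Import all_boot all_order all_algebra.
From mathcomp Require Import all_classical all_reals all_analysis.
From mathcomp Require Import ring lra.
Import numFieldNormedType.Exports.
Import Order.TTheory GRing.Theory Num.Theory.
Local Open Scope ring_scope.
Local Open Scope classical_set_scope.

(* Both implications rest on separating a point of V(Sigma) from the closed
   convex cone [hat P] by continuous functions: a point outside a weak-star
   closure is at positive distance from it on finitely many test functions,
   where Hahn-Banach in finite dimension applies.

   (i) -> (ii): let [T0] be the distinguished scale.  If the Carnot element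
   (0, T0(s') delta_s' - T0(s) delta_s), or its negative, were outside [hat P],
   a separating pair (eta, g) would satisfy the Clausius-Duhem inequality with
   T0(s') g(s') <> T0(s) g(s); then 1 / (1 / T0 + lam g), for small lam > 0,
   is a Clausius-Duhem scale that is not proportional to [T0] on Sigma0.

   (ii) -> (i): the Clausius-Duhem inequality applied to a Carnot element and
   to its negative gives c' / T(s') = c / T(s) for every scale T, so all
   scales are proportional on Sigma0.  Some scale exists: otherwise Hahn-Banach
   on C(Sigma) yields a nonzero positive measure nu with (0, nu) in [hat P],
   against the Kelvin-Planck property. *)

Section HahnBanach.
Variables (R : realType) (X : Type).
Local Notation E := (X -> R).
Variable V : set E.
Hypothesis VD : forall {f g}, V f -> V g -> V (fun x => f x + g x).
Hypothesis VZ : forall a {f}, V f -> V (fun x => a * f x).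
Variable phi : E -> R.
Hypothesis phiD : forall {f g}, V f -> V g ->
  phi (fun x => f x + g x) <= phi f + phi g.
Hypothesis phiZ : forall t {f}, V f -> 0 < t -> t * phi f <= phi (fun x => t * f x).
Variable x0 : E.
Hypothesis Vx0 : V x0.

Lemma subspace0 : V (fun _ => 0).
Proof.
by have := VZ 0 Vx0; congr V; apply: funext => x; rewrite mul0r.
Qed.

Lemma sublinearZ t f : V f -> 0 < t -> phi (fun x => t * f x) = t * phi f.
Proof.
move=> Vf t0; apply/eqP; rewrite eq_le phiZ // andbT.
have ti : 0 < t^-1 by rewrite invr_gt0.
have := phiZ t^-1 (VZ t Vf) ti.
have -> : (fun x => t^-1 * (t * f x)) = f.
  by apply: funext => x; rewrite mulKf ?gt_eqF.
by rewrite ler_pdivrMl.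
Qed.

Lemma sublinear0_ge0 : 0 <= phi (fun _ => 0).
Proof.
have := phiD subspace0 subspace0.
have -> : (fun _ : X => 0 + 0 : R) = (fun _ => 0) by apply: funext => x; rewrite addr0.
lra.
Qed.

(* [phi] is homogeneous for positive scalars only; for [t < 0] the bound
   comes from [0 <= phi 0 <= phi (t x0) + phi (- t x0)]. *)
Lemma sublinear_line t : t * phi x0 <= phi (fun x => t * x0 x).
Proof.
have [t0|t0|->] := ltgtP t 0; last first.
- have -> : (fun x => 0 * x0 x) = (fun _ => 0) by apply: funext => x; rewrite mul0r.
  by rewrite mul0r sublinear0_ge0.
- exact: phiZ.
have := phiD (VZ t Vx0) (VZ (- t) Vx0).
have -> : (fun x => t * x0 x + - t * x0 x) = (fun _ => 0).
  by apply: funext => x; ring.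
rewrite (@sublinearZ (- t) x0) ?oppr_gt0 //; have := sublinear0_ge0; lra.
Qed.

Definition dominated_graph (G : set (E * R)) :=
  [/\ (forall f r, G (f, r) -> V f /\ r <= phi f),
      (forall f r s, G (f, r) -> G (f, s) -> r = s),
      (forall f r g s a b, G (f, r) -> G (g, s) ->
          G (fun x => a * f x + b * g x, a * r + b * s)) &
      (forall t, G (fun x => t * x0 x, t * phi x0))].

Definition graph_extension (G : set (E * R)) (h : E) (c : R) : set (E * R) :=
  [set z | exists f r t, G (f, r) /\ z = ((fun x => f x + t * h x), r + t * c)].

Definition admissible_extension_value (G : set (E * R)) (h : E) (c : R) :=
  (forall f r, G (f, r) -> r - phi (fun x => f x - h x) <= c) /\
  (forall g s, G (g, s) -> c <= phi (fun x => g x + h x) - s).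

Section DominatedGraph.
Context {G : set (E * R)} (domG : dominated_graph G).

Lemma dominated_graphZ {f r} a : G (f, r) -> G (fun x => a * f x, a * r).
Proof.
case: domG => _ _ Glin _ Gfr; have := Glin _ _ _ _ a 0 Gfr Gfr.
by rewrite mul0r addr0; congr G; congr pair; apply: funext => x; ring.
Qed.

Lemma dominated_graphD {f r g s} : G (f, r) -> G (g, s) ->
  G (fun x => f x + g x, r + s).
Proof.
case: domG => _ _ Glin _ Gfr Ggs; have := Glin _ _ _ _ 1 1 Gfr Ggs.
by rewrite !mul1r; congr G; congr pair; apply: funext => x; ring.
Qed.

Lemma dominated_graph0 : G (fun _ => 0, 0).
Proof.
case: domG => _ _ _ Gbase; have := Gbase 0.
by rewrite mul0r; congr G; congr pair; apply: funext => x; rewrite mul0r.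
Qed.

Context {h : E} (Vh : V h) (Gh : ~ exists r, G (h, r)).

Lemma exists_admissible_extension_value : exists c, admissible_extension_value G h c.
Proof.
have [Gdom _ _ _] := domG.
pose L := [set z.2 - phi (fun x => z.1 x - h x) | z in G].
have Lub g s : G (g, s) -> ubound L (phi (fun x => g x + h x) - s).
  move=> Ggs _ [[f r] /= Gfr <-].
  have [Vf _] := Gdom _ _ Gfr; have [Vg _] := Gdom _ _ Ggs.
  have [_ le_fg] := Gdom _ _ (dominated_graphD Gfr Ggs).
  have := phiD (VD Vf (VZ (-1) Vh)) (VD Vg Vh).
  have -> : (fun x => f x + -1 * h x + (g x + h x)) = (fun x => f x + g x).
    by apply: funext => x; ring.
  have -> : (fun x => f x + -1 * h x) = (fun x => f x - h x).
    by apply: funext => x; ring.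
  lra.
have G0 := dominated_graph0.
have Lne : L !=set0 by exists (0 - phi (fun x => 0 - h x)); exists (fun _ => 0, 0).
have Lbd : has_ubound L by exists (phi (fun x => 0 + h x) - 0); exact: Lub.
exists (sup L); split=> [f r Gfr|g s Ggs].
- by apply: sup_upper_bound => //; exists (f, r).
- exact: ge_sup (Lub _ _ Ggs).
Qed.

Context {c : R} (admissible_c : admissible_extension_value G h c).

(* For [t > 0] divide by [t] and use the upper bound on [c]; for [t < 0]
   divide by [-t] and use the lower bound. *)
Lemma graph_extension_le f r t : G (f, r) ->
  r + t * c <= phi (fun x => f x + t * h x).
Proof.
move=> Gfr; have [Gdom _ _ _] := domG; have [Vf rle] := Gdom _ _ Gfr.
have [lower upper] := admissible_c.
have [t0|t0|->] := ltgtP t 0; last first.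
- have -> : (fun x => f x + 0 * h x) = f by apply: funext => x; ring.
  by rewrite mul0r addr0.
- have := upper _ _ (dominated_graphZ t^-1 Gfr).
  have Vs : V (fun x => t^-1 * f x + h x) by apply: VD => //; exact: VZ.
  have <- : t * phi (fun x => t^-1 * f x + h x) = phi (fun x => f x + t * h x).
    rewrite -sublinearZ //; congr phi; apply: funext => x.
    by rewrite mulrDr mulrA mulfV ?gt_eqF // mul1r.
  move=> le; have := ler_wpM2l (ltW t0) le.
  by rewrite mulrBr mulrA mulfV ?gt_eqF // mul1r; lra.
- have u0 : 0 < - t by rewrite oppr_gt0.
  have := lower _ _ (dominated_graphZ (- t)^-1 Gfr).
  have Vmh : V (fun x => - h x).
    by have := VZ (-1) Vh; congr V; apply: funext => x; rewrite mulN1r.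
  have Vs : V (fun x => (- t)^-1 * f x - h x) by apply: VD => //; exact: VZ.
  have <- : - t * phi (fun x => (- t)^-1 * f x - h x) = phi (fun x => f x + t * h x).
    rewrite -sublinearZ //; congr phi; apply: funext => x.
    by rewrite mulrBr mulrA mulfV ?gt_eqF // mul1r; ring.
  move=> le; have := ler_wpM2l (ltW u0) le.
  by rewrite mulrBr mulrA mulfV ?gt_eqF // mul1r; lra.
Qed.

Lemma graph_extension_functional f r s :
  graph_extension G h c (f, r) -> graph_extension G h c (f, s) -> r = s.
Proof.
have [_ Gfun Glin _] := domG.
move=> [f1 [r1 [t1 [G1 [-> ->]]]]] [f2 [r2 [t2 [G2 [E12 ->]]]]].
have E12x x : f1 x + t1 * h x = f2 x + t2 * h x by have := congr1 (fun F => F x) E12.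
have [t12|t12] := eqVneq t1 t2.
  have f12 : f1 = f2 by apply: funext => x; have := E12x x; rewrite t12; lra.
  by move: G2; rewrite -f12 -t12 => /(Gfun _ _ _ G1) ->.
exfalso; apply: Gh; eexists.
have := Glin _ _ _ _ (t2 - t1)^-1 (- (t2 - t1)^-1) G1 G2.
congr G; congr pair; apply: funext => x.
have nz : t2 - t1 != 0 by rewrite subr_eq0 eq_sym.
have -> : f1 x = f2 x + (t2 - t1) * h x by have := E12x x; lra.
by rewrite mulNr -mulrBr addrAC subrr add0r mulKf.
Qed.

Lemma graph_extension_dominated : dominated_graph (graph_extension G h c).
Proof.
have [Gdom _ Glin Gbase] := domG; split.
- move=> _ _ [f [r [t [Gfr [-> ->]]]]]; split; last exact: graph_extension_le.
  by have [Vf _] := Gdom _ _ Gfr; exact: VD Vf (VZ t Vh).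
- exact: graph_extension_functional.
- move=> _ _ _ _ a b [f [r [t [Gfr [-> ->]]]]] [g [s [t' [Ggs [-> ->]]]]].
  exists (fun x => a * f x + b * g x), (a * r + b * s), (a * t + b * t').
  by split; [exact: Glin | congr pair; [apply: funext => x|]; ring].
- move=> t; exists (fun x => t * x0 x), (t * phi x0), 0.
  by split => //; congr pair; [apply: funext => x|]; ring.
Qed.

Lemma graph_extension_proper : G `<` graph_extension G h c.
Proof.
split.
  move=> [f r] Gfr; exists f, r, 0; split => //.
  by congr pair; [apply: funext => x|]; ring.
move=> /(_ (h, c)) Gext; apply: Gh; exists c; apply: Gext.
exists (fun _ => 0), 0, 1; split; first exact: dominated_graph0.
by congr pair; [apply: funext => x|]; ring.
Qed.

End DominatedGraph.

Lemma dominated_graph_bigcup (F : set (set (E * R))) :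
  (forall G, F G -> G = set0 \/ dominated_graph G) -> total_on F subset ->
  (exists2 G, F G & dominated_graph G) -> dominated_graph (\bigcup_(G in F) G).
Proof.
move=> FP Ftot [G0 FG0 domG0].
have domF G z : F G -> G z -> dominated_graph G.
  by move=> FG Gz; case: (FP _ FG) => // G0e; rewrite G0e in Gz.
split.
- by move=> f r [G FG Gz]; have [Gdom _ _ _] := domF _ _ FG Gz; exact: Gdom.
- move=> f r s [G1 F1 G1z] [G2 F2 G2z].
  have [S12|S21] := Ftot _ _ F1 F2.
  + by have [_ Gfun _ _] := domF _ _ F2 G2z; exact: Gfun _ _ _ (S12 _ G1z) G2z.
  + by have [_ Gfun _ _] := domF _ _ F1 G1z; exact: Gfun _ _ _ G1z (S21 _ G2z).
- move=> f r g s a b [G1 F1 G1z] [G2 F2 G2z].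
  have [S12|S21] := Ftot _ _ F1 F2.
  + have [_ _ Glin _] := domF _ _ F2 G2z.
    by exists G2 => //; exact: Glin _ _ _ _ _ _ (S12 _ G1z) G2z.
  + have [_ _ Glin _] := domF _ _ F1 G1z.
    by exists G1 => //; exact: Glin _ _ _ _ _ _ G1z (S21 _ G2z).
- by move=> t; exists G0 => //; case: domG0.
Qed.

Lemma line_graph_dominated :
  dominated_graph [set ((fun x => t * x0 x), t * phi x0) | t in [set: R]].
Proof.
split.
- by move=> f r [t _ [<- <-]]; split; [exact: VZ | exact: sublinear_line].
- move=> f r s [t _ [<- <-]] [t' _ [Ef <-]].
  have [[x nz]|x00] := pselect (exists x, x0 x != 0).
    by have := congr1 (fun F => F x) Ef => /= /(mulIf nz) ->.
  have {}x00 : x0 = (fun _ => 0).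
    by apply: funext => x; apply: contrapT => nz; apply: x00; exists x; exact/eqP.
  suff -> : phi x0 = 0 by rewrite !mulr0.
  have := sublinearZ 2%:R x0 Vx0 (ltr0Sn R 1); rewrite x00.
  have -> : (fun _ : X => 2%:R * 0 : R) = (fun _ => 0) by apply: funext => x; rewrite mulr0.
  lra.
- move=> f r g s a b [t _ [<- <-]] [t' _ [<- <-]].
  by exists (a * t + b * t') => //; congr pair; [apply: funext => x|]; ring.
- by move=> t; exists t.
Qed.

Theorem hahn_banach : exists nu : E -> R,
  [/\ (forall f g, V f -> V g -> nu (fun x => f x + g x) = nu f + nu g),
      (forall a f, V f -> nu (fun x => a * f x) = a * nu f),
      (forall f, V f -> nu f <= phi f) & nu x0 = phi x0].
Proof.
(* [set0] is admitted so that the union of the empty chain qualifies. *)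
pose admissible G := G = set0 \/ dominated_graph G.
have [A [admA Amax]] : exists A, admissible A /\ forall B, A `<` B -> ~ admissible B.
  apply: Zorn_bigcup => F FP Ftot.
  have [allz|] := pselect (forall G, F G -> G = set0).
    by left; apply/seteqP; split => // z [G FG]; rewrite (allz _ FG).
  move=> /existsNP [G0 /not_implyP [FG0 G0n]].
  right; apply: dominated_graph_bigcup => //; exists G0 => //.
  by case: (FP _ FG0).
have domA : dominated_graph A.
  case: admA => // A0; exfalso; apply: (Amax _ _ (or_intror line_graph_dominated)).
  rewrite A0; split => //; move=> /(_ ((fun x => 1 * x0 x), 1 * phi x0)).
  by apply => //; exists 1.
have [Adom Afun _ Abase] := domA.
have Atot f : V f -> exists r, A (f, r).
  move=> Vf; apply: contrapT => Af.
  have [c admc] := exists_admissible_extension_value domA Vf.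
  apply: (Amax (graph_extension A f c)); first exact: graph_extension_proper.
  by right; exact: graph_extension_dominated.
pose nu f := xget 0 (fun r => A (f, r)).
have nuP f : V f -> A (f, nu f) by move=> Vf; exact: (xgetPex 0 (Atot f Vf)).
exists nu; split.
- move=> f g Vf Vg; apply: (Afun _ _ _ (nuP _ (VD Vf Vg))).
  by have := dominated_graphD domA (nuP _ Vf) (nuP _ Vg).
- move=> a f Vf; apply: (Afun _ _ _ (nuP _ (VZ a Vf))).
  by have := dominated_graphZ domA a (nuP _ Vf).
- by move=> f Vf; have [] := Adom _ _ (nuP _ Vf).
- apply: (Afun _ _ _ (nuP _ Vx0)); have := Abase 1; rewrite mul1r; congr A.
  by congr pair; apply: funext => x; rewrite mul1r.
Qed.

End HahnBanach.

Section Functionals.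
Context {R : realType} {T : topologicalType}.
Implicit Types (mu nu : @functional R T) (f g : T -> R).

Lemma continuous_add {f g} : continuous f -> continuous g ->
  continuous (fun x => f x + g x).
Proof. by move=> cf cg x; exact: (continuousD (cf x) (cg x)). Qed.

Lemma continuous_scale a {f} : continuous f -> continuous (fun x => a * f x).
Proof.
move=> cf x; have ca : continuous (fun _ : T => a) by exact: cst_continuous.
exact: (continuousM (ca x) (cf x)).
Qed.

Lemma continuous_inv {f} : continuous f -> (forall x, f x != 0) ->
  continuous (fun x => (f x)^-1).
Proof. by move=> cf f0 x; exact: (continuousV (f0 x) (cf x)). Qed.

Lemma continuous_sum (I : Type) (s : seq I) (F : I -> T -> R) :
  (forall i, continuous (F i)) -> continuous (fun x => \sum_(i <- s) F i x).
Proof.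
move=> cF; elim: s => [|i s IH].
  under eq_fun do rewrite big_nil; exact: cst_continuous.
under eq_fun do rewrite big_cons; exact: continuous_add.
Qed.

Lemma compact_bounded_fun f : compact [set: T] -> continuous f ->
  exists M : R, forall x, `|f x| <= M.
Proof.
move=> cT cf; have : compact (f @` setT).
  by apply: continuous_compact => //; exact: continuous_subspaceT.
move=> /compact_bounded [M [_ HM]]; exists (M + 1) => x.
by apply: (HM (M + 1)); [rewrite ltrDl | exists x].
Qed.

Lemma meas0 {mu} : is_measure mu -> mu (fun _ => 0) = 0.
Proof.
have c0 : continuous (fun _ : T => 0 : R) by exact: cst_continuous.
by case=> _ muZ _; have := muZ 0 _ c0; rewrite !mul0r.
Qed.

Lemma measD {mu f g} : is_measure mu -> continuous f -> continuous g ->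
  mu (fun x => f x + g x) = mu f + mu g.
Proof. by case=> muD _ _; exact: muD. Qed.

Lemma measZ {mu} a {f} : is_measure mu -> continuous f ->
  mu (fun x => a * f x) = a * mu f.
Proof. by case=> _ muZ _; exact: muZ. Qed.

Lemma meas_sum mu (I : Type) (s : seq I) (F : I -> T -> R) :
  is_measure mu -> (forall i, continuous (F i)) ->
  mu (fun x => \sum_(i <- s) F i x) = \sum_(i <- s) mu (F i).
Proof.
move=> m cF; elim: s => [|i s IH].
  by under eq_fun do rewrite big_nil; rewrite big_nil meas0.
under eq_fun do rewrite big_cons.
by rewrite big_cons measD // -?IH //; exact: continuous_sum.
Qed.

Lemma is_measure_comb {mu nu} (a b : R) : is_measure mu -> is_measure nu ->
  is_measure (fun f => a * mu f + b * nu f).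
Proof.
move=> m1 m2; have [D1 Z1 [M1 B1]] := m1; have [D2 Z2 [M2 B2]] := m2.
split.
- by move=> f g cf cg; rewrite D1 // D2 //; ring.
- by move=> c f cf; rewrite Z1 // Z2 //; ring.
- exists (`|a| * M1 + `|b| * M2) => f c cf hb.
  apply: (le_trans (ler_normD _ _)); rewrite !normrM mulrDl -!mulrA.
  by apply: lerD; apply: ler_wpM2l => //; [exact: B1 | exact: B2].
Qed.

Lemma is_measure_dirac s : is_measure (Defs.dirac s : @functional R T).
Proof. by split => //; exists 1 => f c _ fc; rewrite mul1r; exact: fc. Qed.

Lemma is_measure_zero : is_measure (@zerof R T).
Proof.
rewrite /zerof; split; [by move=> *; rewrite addr0 | by move=> *; rewrite mulr0 |].
by exists 0 => f c _ _; rewrite normr0 mul0r.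
Qed.

Lemma is_measure_ext {mu nu} : is_measure mu -> (forall f, mu f = nu f) ->
  is_measure nu.
Proof. by move=> m /funext <-. Qed.

Lemma is_pos_measure_of_linear nu :
  (forall f g, continuous f -> continuous g ->
     nu (fun x => f x + g x) = nu f + nu g) ->
  (forall a f, continuous f -> nu (fun x => a * f x) = a * nu f) ->
  (forall f, continuous f -> (forall x, 0 <= f x) -> 0 <= nu f) ->
  is_pos_measure nu.
Proof.
move=> nuD nuZ nu_ge0; split => //; split => //; exists (nu Defs.one) => f c cf fc.
have cc : continuous (fun _ : T => c) by exact: cst_continuous.
have nuc : nu (fun _ => c) = c * nu Defs.one.
  by rewrite -nuZ; [congr nu; apply: funext => x; rewrite /Defs.one mulr1 | exact: cst_continuous].
have fc' x : - c <= f x <= c by rewrite -ler_norml.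
have lo : 0 <= nu (fun x => f x + c).
  by apply: nu_ge0 => [|x]; [exact: continuous_add | have /andP[] := fc' x; lra].
have hi : 0 <= nu (fun x => c + -1 * f x).
  apply: nu_ge0 => [|x]; last by have /andP[] := fc' x; lra.
  exact/continuous_add/continuous_scale.
rewrite nuD // in lo; rewrite nuD ?nuZ // in hi; last exact: continuous_scale.
by rewrite mulrC -nuc ler_norml; apply/andP; split; lra.
Qed.

End Functionals.

Section Hat.
Context {R : realType} {T : topologicalType}.
Local Notation pair_fun := (@functional R T * @functional R T)%type.
Context {P : set pair_fun}.

Lemma hat_of_P {q} : (forall q, P q -> in_V q) -> P q -> hat P q.
Proof.
move=> PV Pq; split; first exact: PV.
move=> n fs eps _ e0; exists 1, q; split => // i.
by rewrite !mul1r !subrr normr0.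
Qed.

Lemma in_V_scale (p : pair_fun) a : in_V p ->
  in_V (fun f => a * p.1 f, fun f => a * p.2 f).
Proof.
case=> m1 m2 p1; split => /=.
- by apply: (is_measure_ext (is_measure_comb a 0 m1 m1)) => f; ring.
- by apply: (is_measure_ext (is_measure_comb a 0 m2 m2)) => f; ring.
- by rewrite p1 mulr0.
Qed.

Lemma hat_scale {p : pair_fun} a : hat P p -> 0 <= a ->
  hat P (fun f => a * p.1 f, fun f => a * p.2 f).
Proof.
case=> Vp Hp a0; split; first exact: in_V_scale.
move=> n fs eps cfs e0.
have e1 : 0 < eps / (a + 1) by apply: divr_gt0 => //; lra.
have [lam [q [Pq l0 Hq]]] := Hp n fs _ cfs e1.
exists (a * lam), q; split => //; first exact: mulr_ge0.
have scale_lt x : 0 <= x -> x < eps / (a + 1) -> a * x < eps.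
  by move=> x0; rewrite ltr_pdivlMr ?ltr_wpDl //; nra.
move=> i; have [h1 h2] := Hq i.
by rewrite /= -!mulrA -!mulrBr !normrM !(ger0_norm a0); split; apply: scale_lt.
Qed.

Lemma hat_add (p q : pair_fun) : thermo_theory P -> hat P p -> hat P q ->
  hat P (fun f => p.1 f + q.1 f, fun f => p.2 f + q.2 f).
Proof.
move=> [_ cvx] hp hq.
have half_ge0 : (0 : R) <= 1 / 2 by lra.
have half_le1 : (1 / 2 : R) <= 1 by lra.
have := hat_scale 2 (cvx p q _ hp hq half_ge0 half_le1) (ler0n _ 2).
have twice_mid (u v : R) : 2 * (1 / 2 * u + (1 - 1 / 2) * v) = u + v by field.
by rewrite /=; under eq_fun do rewrite twice_mid;
  under [X in _ (_, X)]eq_fun do rewrite twice_mid.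
Qed.

(* The Clausius-Duhem inequality is closed, linear in [p] and positively
   homogeneous, so it passes from [P] to [hat P]. *)
Lemma CD_pair_hat {eta Temp} {p : pair_fun} : CD_pair P eta Temp -> hat P p ->
  p.2 (fun x => (Temp x)^-1) <= p.1 eta.
Proof.
case=> ceta cT Tpos CD [_ Hp].
set g := fun x => (Temp x)^-1.
have cg : continuous g by apply: continuous_inv => // x; rewrite gt_eqF.
rewrite leNgt; apply/negP => lt.
have e0 : 0 < (p.2 g - p.1 eta) / 3 by apply: divr_gt0; rewrite ?subr_gt0.
pose fs (i : 'I_2) := if val i == 0%N then eta else g.
have cfs i : continuous (fs i) by rewrite /fs; case: ifP.
have [lam [q [Pq l0 Hi]]] := Hp 2%N fs _ cfs e0.
have [+ _] := Hi ord0; have [_ +] := Hi (@Ordinal 2 1 isT).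
rewrite /fs /= !ltr_norml => /andP [h1 h1'] /andP [h2 h2'].
have := ler_wpM2l l0 (CD q Pq); lra.
Qed.

End Hat.

Section FiniteSeparation.
Context {R : realType} {X : finType}.
Implicit Types (y z : X -> R).

Definition l1_dist y z : R := \sum_(x : X) `|y x - z x|.

Lemma l1_dist_ge0 y z : 0 <= l1_dist y z.
Proof. exact: sumr_ge0. Qed.

Lemma l1_distxx y : l1_dist y y = 0.
Proof. by rewrite /l1_dist big1 // => x _; rewrite subrr normr0. Qed.

Lemma l1_dist_coord y z x : `|y x - z x| <= l1_dist y z.
Proof. by rewrite /l1_dist (bigD1 x) //= lerDl sumr_ge0. Qed.

Lemma l1_distD y1 y2 z1 z2 :
  l1_dist (fun x => y1 x + y2 x) (fun x => z1 x + z2 x) <=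
  l1_dist y1 z1 + l1_dist y2 z2.
Proof.
rewrite /l1_dist -big_split /=; apply: ler_sum => x _.
have -> : y1 x + y2 x - (z1 x + z2 x) = (y1 x - z1 x) + (y2 x - z2 x) by ring.
exact: ler_normD.
Qed.

Lemma l1_distZ t y z : 0 < t ->
  l1_dist (fun x => t * y x) z = t * l1_dist y (fun x => t^-1 * z x).
Proof.
move=> t0; rewrite /l1_dist mulr_sumr; apply: eq_bigr => x _.
have -> : t * y x - z x = t * (y x - t^-1 * z x).
  by rewrite mulrBr mulrA mulfV ?gt_eqF // mul1r.
by rewrite normrM gtr0_norm.
Qed.

Lemma linear_fin_weights (nu : (X -> R) -> R) :
  (forall y z, nu (fun x => y x + z x) = nu y + nu z) ->
  (forall a y, nu (fun x => a * y x) = a * nu y) ->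
  forall y, nu y = \sum_(x : X) y x * nu (fun i => (i == x)%:R).
Proof.
move=> nuD nuZ y.
have {1}-> : y = (fun i => \sum_(x : X) y x * (i == x)%:R).
  apply: funext => i; rewrite (bigD1 i) //= eqxx mulr1 big1 ?addr0 // => x /negbTE.
  by rewrite eq_sym => ->; rewrite mulr0.
elim: (index_enum X) => [|x s IH].
  rewrite big_nil; under eq_fun do rewrite big_nil -(mul0r 0).
  by rewrite nuZ mul0r.
by rewrite big_cons -IH -nuZ -nuD; under eq_fun do rewrite big_cons.
Qed.

Context {C : set (X -> R)}.
Hypothesis C0 : C (fun _ => 0).
Hypothesis CD : forall {c1 c2}, C c1 -> C c2 -> C (fun x => c1 x + c2 x).
Hypothesis CZ : forall a {c}, 0 < a -> C c -> C (fun x => a * c x).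

(* The l1-distance to the cone [C] is sublinear; Hahn-Banach dominates it by a
   linear functional attaining it at [y]. *)
Lemma cone_separation y eps : 0 < eps -> (forall c, C c -> eps <= l1_dist y c) ->
  exists w : X -> R, (forall c, C c -> \sum_(x : X) w x * c x <= 0) /\
    0 < \sum_(x : X) w x * y x.
Proof.
move=> e0 far.
pose d z := inf [set l1_dist z c | c in C].
have d_le z c : C c -> d z <= l1_dist z c.
  move=> Cc; apply: ge_inf; last by exists c.
  by exists 0 => _ [c' _ <-]; exact: l1_dist_ge0.
have le_d z r : (forall c, C c -> r <= l1_dist z c) -> r <= d z.
  move=> lb; apply: lb_le_inf; first by exists (l1_dist z (fun _ => 0)), (fun _ => 0).
  by move=> _ [c Cc <-]; exact: lb.
have dD y1 y2 : d (fun x => y1 x + y2 x) <= d y1 + d y2.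
  suff : d (fun x => y1 x + y2 x) - d y2 <= d y1 by lra.
  apply: (le_d) => c1 C1; suff : d (fun x => y1 x + y2 x) - l1_dist y1 c1 <= d y2 by lra.
  apply: (le_d) => c2 C2; have := d_le (fun x => y1 x + y2 x) _ (CD C1 C2).
  have := l1_distD y1 y2 c1 c2; lra.
have dZ t z : 0 < t -> t * d z <= d (fun x => t * z x).
  move=> t0; apply: (le_d) => c Cc; rewrite l1_distZ // ler_pM2l //.
  by apply: d_le; apply: CZ => //; rewrite invr_gt0.
have [nu [nuD nuZ nu_le nuy]] := @hahn_banach R X setT (fun _ _ _ _ => I)
  (fun _ _ _ => I) d (fun f g _ _ => dD f g) (fun t f _ t0 => dZ t f t0) y I.
have nuE := linear_fin_weights nu (fun y z => nuD y z I I) (fun a y => nuZ a y I).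
exists (fun x => nu (fun i => (i == x)%:R)); split.
- move=> c Cc; have := nu_le c I; rewrite nuE.
  under eq_bigr do rewrite mulrC.
  by have := d_le c c Cc; rewrite l1_distxx; lra.
- under eq_bigr do rewrite mulrC; rewrite -nuE nuy.
  by apply: lt_le_trans e0 _; exact: (le_d).
Qed.

End FiniteSeparation.

Section HatSeparation.
Context {R : realType} {T : topologicalType}.
Local Notation pair_fun := (@functional R T * @functional R T)%type.
Context {P : set pair_fun}.
Hypothesis thP : thermo_theory P.
Hypothesis hat00 : hat P (zerof, zerof).

(* The weights of a finite-dimensional separation, read back as combinations
   of the test functions, give [(eta, g)]. *)
Lemma hat_separation {p : pair_fun} : in_V p -> ~ hat P p ->
  exists eta g, [/\ continuous eta, continuous g,
    (forall q, P q -> q.2 g <= q.1 eta) & p.1 eta < p.2 g].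
Proof.
move=> Vp nhp; apply: contrapT => nosep; apply: nhp; split => // n fs eps cfs e0.
apply: contrapT => far.
pose test (q : pair_fun) (x : bool * 'I_n) :=
  if x.1 then q.2 (fs x.2) else q.1 (fs x.2).
pose C := [set test q | q in hat P].
have C0 : C (fun _ => 0) by exists (zerof, zerof) => //; apply: funext => -[[]].
have CD c1 c2 : C c1 -> C c2 -> C (fun x => c1 x + c2 x).
  move=> [q1 h1 <-] [q2 h2 <-].
  exists (fun f => q1.1 f + q2.1 f, fun f => q1.2 f + q2.2 f); first exact: hat_add.
  by apply: funext => -[[]].
have CZ a c : 0 < a -> C c -> C (fun x => a * c x).
  move=> a0 [q hq <-].
  exists (fun f => a * q.1 f, fun f => a * q.2 f); first exact: hat_scale (ltW a0).
  by apply: funext => -[[]].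
have e2 : 0 < eps / 2 by apply: divr_gt0.
have p_far c : C c -> eps / 2 <= l1_dist (test p) c.
  move=> [q hq <-]; rewrite leNgt; apply/negP => near; apply: far.
  have [lam [q' [Pq' l0 Hq']]] := hq.2 n fs _ cfs e2.
  exists lam, q'; split => // i; have [h1 h2] := Hq' i.
  have := l1_dist_coord (test p) (test q) (false, i).
  have := l1_dist_coord (test p) (test q) (true, i); rewrite /test /= => t2 t1.
  split; [rewrite -(subrKA (q.1 (fs i))) | rewrite -(subrKA (q.2 (fs i)))];
    apply: le_lt_trans (ler_normD _ _) _; lra.
have [w [wC wp]] := cone_separation C0 CD CZ _ _ e2 p_far.
pose g t := \sum_(x : bool * 'I_n) (if x.1 then w x else 0) * fs x.2 t.
pose eta t := \sum_(x : bool * 'I_n) (if x.1 then 0 else - w x) * fs x.2 t.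
have cg : continuous g by apply: continuous_sum => x; exact: continuous_scale.
have ceta : continuous eta by apply: continuous_sum => x; exact: continuous_scale.
have pairing q : in_V q -> \sum_x w x * test q x = q.2 g - q.1 eta.
  case=> m1 m2 _; rewrite !meas_sum // -?sumrB; last by move=> x; exact: continuous_scale.
  - by apply: eq_bigr => -[[] i] _; rewrite !measZ //= ?mul0r ?subr0 ?sub0r ?mulNr ?opprK.
  - by move=> x; exact: continuous_scale.
apply: nosep; exists eta, g; split => //.
- move=> q Pq; have := wC _ (ex_intro2 _ _ q (hat_of_P (thP.1) Pq) erefl).
  by rewrite pairing ?subr_le0 //; exact: thP.1.
- by rewrite -subr_gt0 -pairing.
Qed.

End HatSeparation.

Section PositiveFunctionalOnCone.
Context {R : realType} {T : topologicalType}.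
Hypothesis cT : compact [set: T].
Variable G : set (T -> R).
Hypothesis G_cont : forall {g}, G g -> continuous g.
Hypothesis G0 : G (fun _ => 0).
Hypothesis GD : forall {g1 g2}, G g1 -> G g2 -> G (fun x => g1 x + g2 x).
Hypothesis GZ : forall a {g}, 0 < a -> G g -> G (fun x => a * g x).
Hypothesis G_not_pos : ~ exists g, G g /\ forall x, 0 < g x.

Lemma cone_le_cst_le0 {g c} : G g -> (forall x, c <= g x) -> c <= 0.
Proof.
move=> Gg cg; rewrite leNgt; apply/negP => c0; apply: G_not_pos.
by exists g; split => // x; exact: lt_le_trans c0 (cg x).
Qed.

(* Finite because [f] is bounded and no element of [G] is bounded below by a
   positive constant. *)
Definition cone_gauge (f : T -> R) :=
  inf [set r | exists g, G g /\ forall x, f x <= g x + r].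

Lemma cone_gauge_le {f g r} : continuous f -> G g -> (forall x, f x <= g x + r) ->
  cone_gauge f <= r.
Proof.
move=> cf Gg fg; apply: ge_inf; last by exists g.
have [M fM] := compact_bounded_fun _ cT cf; exists (- M) => r' [g' [Gg' fg']].
suff : - M - r' <= 0 by lra.
apply: (cone_le_cst_le0 Gg') => x; have := fg' x; have := fM x.
by rewrite ler_norml => /andP[]; lra.
Qed.

Lemma le_cone_gauge f c : continuous f ->
  (forall g r, G g -> (forall x, f x <= g x + r) -> c <= r) -> c <= cone_gauge f.
Proof.
move=> cf lb; apply: lb_le_inf => [|r [g [Gg fg]]]; last exact: lb Gg fg.
have [M fM] := compact_bounded_fun _ cT cf; exists M, (fun _ => 0); split => // x.
by rewrite add0r; exact: le_trans (ler_norm _) (fM x).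
Qed.

Lemma cone_gaugeD f1 f2 : continuous f1 -> continuous f2 ->
  cone_gauge (fun x => f1 x + f2 x) <= cone_gauge f1 + cone_gauge f2.
Proof.
move=> c1 c2; have c12 := continuous_add c1 c2.
suff : cone_gauge (fun x => f1 x + f2 x) - cone_gauge f2 <= cone_gauge f1 by lra.
apply: le_cone_gauge => // g1 r1 G1 f1g1.
suff : cone_gauge (fun x => f1 x + f2 x) - r1 <= cone_gauge f2 by lra.
apply: le_cone_gauge => // g2 r2 G2 f2g2.
suff : cone_gauge (fun x => f1 x + f2 x) <= r1 + r2 by lra.
apply: (cone_gauge_le c12 (GD G1 G2)) => x.
by have := f1g1 x; have := f2g2 x; lra.
Qed.

Lemma cone_gaugeZ t f : continuous f -> 0 < t ->
  t * cone_gauge f <= cone_gauge (fun x => t * f x).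
Proof.
move=> cf t0; apply: le_cone_gauge => [|g r Gg fg]; first exact: continuous_scale.
have ti : 0 < t^-1 by rewrite invr_gt0.
rewrite -ler_pdivlMl //; apply: (cone_gauge_le cf (GZ _ ti Gg)) => x.
have := ler_wpM2l (ltW ti) (fg x).
by rewrite mulrA mulVf ?gt_eqF // mul1r mulrDr.
Qed.

Lemma exists_pos_functional_nonpos_on_cone :
  exists nu : @functional R T,
    [/\ is_pos_measure nu, 0 < nu Defs.one & forall g, G g -> nu g <= 0].
Proof.
have cont_one : continuous (@Defs.one R T) by exact: cst_continuous.
have [nu [nuD nuZ nu_le nu1]] := @hahn_banach R T (fun f : T -> R => continuous f)
  (fun f g => @continuous_add R T f g) (fun a f => @continuous_scale R T a f)
  cone_gauge cone_gaugeD cone_gaugeZ Defs.one cont_one.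
have nu_le0 (f : T -> R) : continuous f -> (forall x, f x <= 0) -> nu f <= 0.
  move=> cf f0; apply: le_trans (nu_le _ cf) _.
  by apply: (cone_gauge_le cf G0) => x; rewrite add0r.
have nu_pos : is_pos_measure nu.
  apply: is_pos_measure_of_linear => // f cf f0.
  have := nu_le0 _ (continuous_scale (-1) cf).
  by rewrite nuZ // mulN1r oppr_le0; apply => x; rewrite mulN1r oppr_le0.
exists nu; split => //.
- rewrite nu1; apply: lt_le_trans ltr01 _.
  apply: le_cone_gauge => // g r Gg g1.
  suff : 1 - r <= 0 by lra.
  by apply: (cone_le_cst_le0 Gg) => x; have := g1 x; rewrite /Defs.one; lra.
- move=> g Gg; apply: le_trans (nu_le _ (G_cont Gg)) _.
  by apply: (cone_gauge_le (G_cont Gg) Gg) => x; rewrite addr0.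
Qed.

End PositiveFunctionalOnCone.

Section ClausiusDuhem.
Context {R : realType} {T : topologicalType}.
Local Notation pair_fun := (@functional R T * @functional R T)%type.

(* [g] is a candidate reciprocal temperature [1/T]: [(eta, 1/g)] would be a
   Clausius-Duhem pair, were [g] positive. *)
Definition CD_cone (P : set pair_fun) (g : T -> R) :=
  continuous g /\ exists eta, continuous eta /\ forall q, P q -> q.2 g <= q.1 eta.

Section Cone.
Context {P : set pair_fun}.
Hypothesis PV : forall {q}, P q -> in_V q.

Lemma CD_cone0 : CD_cone P (fun _ => 0).
Proof.
split; first exact: cst_continuous.
exists (fun _ => 0); split; first exact: cst_continuous.
by move=> q /PV [m1 m2 _]; rewrite !meas0.
Qed.

Lemma CD_coneD {g1 g2} : CD_cone P g1 -> CD_cone P g2 ->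
  CD_cone P (fun x => g1 x + g2 x).
Proof.
move=> [c1 [e1 [ce1 CD1]]] [c2 [e2 [ce2 CD2]]].
split; first exact: continuous_add.
exists (fun x => e1 x + e2 x); split; first exact: continuous_add.
move=> q Pq; have [m1 m2 _] := PV Pq; rewrite !measD //.
by have := CD1 q Pq; have := CD2 q Pq; lra.
Qed.

Lemma CD_coneZ a {g} : 0 <= a -> CD_cone P g -> CD_cone P (fun x => a * g x).
Proof.
move=> a0 [cg [eta [ceta CD]]]; split; first exact: continuous_scale.
exists (fun x => a * eta x); split; first exact: continuous_scale.
move=> q Pq; have [m1 m2 _] := PV Pq; rewrite !measZ //.
exact: ler_wpM2l (CD q Pq).
Qed.

End Cone.

Lemma CD_cone_of_pair {P : set pair_fun} {eta Temp} : CD_pair P eta Temp ->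
  CD_cone P (fun x => (Temp x)^-1).
Proof.
case=> ceta cT Tpos CD; split; last by exists eta.
by apply: continuous_inv => // x; rewrite gt_eqF.
Qed.

Lemma CD_scale_of_cone {P : set pair_fun} {g} : CD_cone P g ->
  (forall x, 0 < g x) -> CD_scale P (fun x => (g x)^-1).
Proof.
move=> [cg [eta [ceta CD]]] gpos; exists eta; split => //.
- by apply: continuous_inv => // x; rewrite gt_eqF.
- by move=> x; rewrite invr_gt0.
- by move=> q Pq; under eq_fun do rewrite invrK; exact: CD.
Qed.

Theorem exists_CD_pair {P : set pair_fun} : compact [set: T] -> Kelvin_Planck P ->
  exists eta Temp, CD_pair P eta Temp.
Proof.
move=> cT [thP hat00 KP_pos].
have [[g [Gg gpos]]|no_pos] := pselect (exists g, CD_cone P g /\ forall x, 0 < g x).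
  by have [eta cd] := CD_scale_of_cone Gg gpos; exists eta, (fun x => (g x)^-1).
have [nu [nu_pos nu1 nu_cone]] := exists_pos_functional_nonpos_on_cone cT (CD_cone P)
  (fun g Gg => Gg.1) (CD_cone0 thP.1) (fun g1 g2 => CD_coneD thP.1)
  (fun a g a0 => CD_coneZ thP.1 a (ltW a0)) no_pos.
have hat_nu : hat P (zerof, nu).
  apply: contrapT => nh.
  have Vnu : in_V (zerof, nu) by split => //; [exact: is_measure_zero | case: nu_pos].
  have [eta [g [ceta cg CD]]] := hat_separation thP hat00 Vnu nh.
  have := nu_cone g (conj cg (ex_intro _ eta (conj ceta CD))).
  by rewrite /= /zerof; lra.
have one_cont : continuous (@Defs.one R T) by exact: cst_continuous.
have := KP_pos _ hat_nu (fun _ _ => erefl) nu_pos _ one_cont.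
by rewrite /= /zerof => nu10; rewrite nu10 ltxx in nu1.
Qed.

Lemma exists_pos_perturbation {Temp g : T -> R} : compact [set: T] ->
  continuous Temp -> (forall x, 0 < Temp x) -> continuous g ->
  exists2 lam : R, 0 < lam & forall x, 0 < (Temp x)^-1 + lam * g x.
Proof.
move=> cT cTemp Tpos cg.
have [M TM] := compact_bounded_fun _ cT cTemp.
have [N gN] := compact_bounded_fun _ cT cg.
have M1 : 0 < `|M| + 1 by rewrite ltr_wpDl.
have N1 : 0 < `|N| + 1 by rewrite ltr_wpDl.
exists ((`|M| + 1) * (`|N| + 1))^-1; first by rewrite invr_gt0 mulr_gt0.
move=> x; have Tx := Tpos x.
have TxM : (`|M| + 1)^-1 <= (Temp x)^-1.
  rewrite lef_pV2 ?posrE //; have := TM x; rewrite gtr0_norm //.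
  by have := ler_norm M; lra.
have gxN : - g x < `|N| + 1.
  by have := gN x; have := ler_norm N; have := ler_norm (- g x); rewrite normrN; lra.
have : ((`|M| + 1) * (`|N| + 1))^-1 * - g x < (`|M| + 1)^-1.
  rewrite invfM -mulrA -[X in _ < X]mulr1 ltr_pM2l ?invr_gt0 //.
  by rewrite mulrC ltr_pdivrMr // mul1r.
rewrite mulrN; lra.
Qed.

(* Perturbing [1/T0] by a small multiple of [g] yields a new temperature
   scale; proportionality to [T0] on [S0] then forces [T0 g] to be constant. *)
Lemma CD_cone_times_scale_const {P : set pair_fun} {S0 : set T} {eta0 T0 g s s'} :
  compact [set: T] -> (forall q, P q -> in_V q) -> CD_pair P eta0 T0 ->
  (forall T1, CD_scale P T1 -> exists c, 0 < c /\ forall x, S0 x -> T1 x = c * T0 x) ->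
  CD_cone P g -> S0 s -> S0 s' -> T0 s * g s = T0 s' * g s'.
Proof.
move=> cT PV cd0 T0_unique Gg S0s S0s'; have [_ cT0 T0pos _] := cd0.
have [lam lam0 pos] := exists_pos_perturbation cT cT0 T0pos Gg.1.
have G1 := CD_coneD PV (CD_cone_of_pair cd0) (CD_coneZ PV lam (ltW lam0) Gg).
have [c [c0 T1E]] := T0_unique _ (CD_scale_of_cone G1 pos).
have T1_on_S0 x : S0 x -> 1 + lam * (T0 x * g x) = c^-1.
  move=> S0x; have Tx0 : T0 x != 0 by rewrite gt_eqF.
  have := congr1 GRing.inv (T1E x S0x); rewrite invrK => E.
  have -> : 1 + lam * (T0 x * g x) = T0 x * ((T0 x)^-1 + lam * g x) by field.
  by rewrite E; field; rewrite Tx0 gt_eqF.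
have lam_neq0 : lam != 0 by rewrite gt_eqF.
apply: (mulfI lam_neq0); have := T1_on_S0 _ S0s; have := T1_on_S0 _ S0s'; lra.
Qed.

Lemma hat_carnot_element {P : set pair_fun} a b s' s : thermo_theory P ->
  hat P (zerof, zerof) -> (forall g, CD_cone P g -> a * g s' = b * g s) ->
  hat P (zerof, fun f => a * Defs.dirac s' f - b * Defs.dirac s f).
Proof.
move=> thP hat00 balanced; apply: contrapT => nh.
have V : in_V (zerof, fun f => a * Defs.dirac s' f - b * Defs.dirac s f).
  split => //=; first exact: is_measure_zero.
  apply: (is_measure_ext (is_measure_comb a (- b) (is_measure_dirac s')
    (is_measure_dirac s))) => f; ring.
have [eta [g [ceta cg CD]]] := hat_separation thP hat00 V nh.
rewrite /= /zerof /Defs.dirac (balanced g) ?subrr ?ltxx //.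
by split => //; exists eta.
Qed.

Lemma reversible_carnot_element {P : set pair_fun} a b s' s : thermo_theory P ->
  hat P (zerof, zerof) -> (forall g, CD_cone P g -> a * g s' = b * g s) ->
  reversible P (zerof, fun f => a * Defs.dirac s' f - b * Defs.dirac s f).
Proof.
move=> thP hat00 balanced; split; first exact: hat_carnot_element.
have -> : (fun f => - (@zerof R T) f,
           fun f => - (a * Defs.dirac s' f - b * Defs.dirac s f)) =
          (zerof, fun f => - a * Defs.dirac s' f - - b * Defs.dirac s f).
  by congr pair; apply: funext => f; rewrite /zerof; ring.
by apply: hat_carnot_element => // g Gg; rewrite !mulNr balanced.
Qed.

Lemma carnot_temperature_ratio {P : set pair_fun} {eta Temp s' s c' c} :
  CD_pair P eta Temp -> 0 < c ->
  reversible P (zerof, fun f => c' * Defs.dirac s' f - c * Defs.dirac s f) ->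
  Temp s' = c' / c * Temp s.
Proof.
move=> cd c0 [fwd bwd]; have [_ _ Tpos _] := cd.
have := CD_pair_hat cd fwd; have := CD_pair_hat cd bwd.
rewrite /= /zerof /Defs.dirac => le1 le2.
have e : c' * (Temp s')^-1 = c * (Temp s)^-1 by lra.
have -> : c' = c * (Temp s)^-1 * Temp s' by rewrite -e mulfVK ?gt_eqF.
by field; rewrite !gt_eqF.
Qed.

End ClausiusDuhem.

Theorem proposition4p1 (R : realType) (T : topologicalType)
  (P : set (@functional R T * @functional R T)) (S0 : set T) :
  compact [set: T] -> hausdorff_space T -> Kelvin_Planck P ->
  ((exists T0 : T -> R, CD_scale P T0 /\
      forall T1 : T -> R, CD_scale P T1 ->
        exists c : R, 0 < c /\ forall x, S0 x -> T1 x = c * T0 x)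
   <->
   (forall s s' : T, S0 s -> S0 s' -> s <> s' -> has_Carnot P s' s)).
Proof.
move=> cT _ KP; have [thP hat00 _] := KP; split.
- move=> [T0 [[eta0 cd0] T0_unique]] s s' S0s S0s' _; have [_ _ T0pos _] := cd0.
  exists (T0 s'), (T0 s); split => //.
  apply: reversible_carnot_element => // g Gg.
  exact: CD_cone_times_scale_const cT thP.1 cd0 T0_unique Gg S0s' S0s.
- move=> carnot; have [eta0 [T0 cd0]] := exists_CD_pair cT KP.
  exists T0; split; first by exists eta0.
  move=> T1 [eta1 cd1]; have [_ _ T0pos _] := cd0.
  have [[s0 S0s0]|S0_empty] := pselect (exists s0, S0 s0); last first.
    by exists 1; split => // x S0x; exfalso; apply: S0_empty; exists x.
  exists (T1 s0 / T0 s0); split; first by case: cd1 => _ _ T1pos _; exact: divr_gt0.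
  move=> x S0x; have [->|xs0] := pselect (x = s0); first by rewrite divfK ?gt_eqF.
  have [c' [c [_ c0 rev]]] := carnot s0 x S0s0 S0x (nesym xs0).
  rewrite (carnot_temperature_ratio cd0 c0 rev) (carnot_temperature_ratio cd1 c0 rev).
  by field; rewrite !gt_eqF ?T0pos.
Qed.
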